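(* Let $N$ be the five-point space with points $a,U,x,V,b$ whose open sets are exactly the subsets $S$ such that ($a\in S\Rightarrow U\in S$), ($x\in S\Rightarrow U,V\in S$) and ($b\in S\Rightarrow V\in S$). Let $M$ be the three-point space with points $a,w,b$ and open sets $\emptyset,\{w\},\{w,a\},\{w,b\},\{a,w,b\}$, and let $n:N\to M$ send $a\mapsto a$, $b\mapsto b$ and $U,x,V\mapsto w$. A topological space $X$ is normal (any two disjoint closed subsets have disjoint open neighbourhoods) iff $(\emptyset\to X)\rightthreetimes n$.
   Context: For morphisms $f:A\to B$ and $g:X\to Y$ in a category, write $f\rightthreetimes g$ (''$f$ has the left lifting property with respect to $g$'') if for all morphisms $i:A\to X$, $j:B\to Y$ with $g\circ i=j\circ f$ there exists a morphism $h:B\to X$ with $h\circ f=i$ and $g\circ h=j$. ''Normal'' does not include any $T_1$ assumption. *)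

From Stdlib Require Import Classical.

Record TopSpace := {
  carrier :> Type;
  open : (carrier -> Prop) -> Prop;
  open_full : open (fun _ => True);
  open_inter : forall S T, open S -> open T -> open (fun x => S x /\ T x);
  open_union : forall F : (carrier -> Prop) -> Prop,
      (forall S, F S -> open S) -> open (fun x => exists S, F S /\ S x)
}.

Arguments open {t} _.

Record cmap (X Y : TopSpace) := {
  cfun :> X -> Y;
  ccont : forall S : Y -> Prop, open S -> open (fun x => S (cfun x))
}.
Arguments cfun {X Y} _ _.

Definition llp {A B X Y : TopSpace} (f : cmap A B) (g : cmap X Y) : Prop :=
  forall (i : cmap A X) (j : cmap B Y),
    (forall z, g (i z) = j (f z)) ->
    exists h : cmap B X, (forall z, h (f z) = i z) /\ (forall y, g (h y) = j y).

Definition closed {X : TopSpace} (C : X -> Prop) : Prop := open (fun x => ~ C x).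

(** Normal space (no T1 assumption). *)
Definition normal (X : TopSpace) : Prop :=
  forall C D : X -> Prop, closed C -> closed D -> (forall x, C x -> D x -> False) ->
  exists U V : X -> Prop, open U /\ open V /\ (forall x, C x -> U x) /\
    (forall x, D x -> V x) /\ (forall x, U x -> V x -> False).

Definition empty_space : TopSpace.
Proof.
  refine {| carrier := Empty_set; open := fun _ => True |}; auto.
Defined.

Definition from_empty (X : TopSpace) : cmap empty_space X.
Proof.
  refine {| cfun := fun e : empty_space => match e : Empty_set with end |}.
  intros; exact I.
Defined.

Inductive Npt := Na | NU | Nx | NV | Nb.

Definition Nopen (S : Npt -> Prop) : Prop :=
  (S Na -> S NU) /\ (S Nx -> S NU /\ S NV) /\ (S Nb -> S NV).

Definition Nspace : TopSpace.
Proof.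
  refine {| carrier := Npt; open := Nopen |}; unfold Nopen.
  - tauto.
  - intros S T HS HT; tauto.
  - intros F HF; split; [|split].
    + intros [S [FS HS]]; destruct (HF S FS) as [h1 [h2 h3]]; exists S; auto.
    + intros [S [FS HS]]; destruct (HF S FS) as [h1 [h2 h3]];
        split; exists S; split; auto; apply h2; auto.
    + intros [S [FS HS]]; destruct (HF S FS) as [h1 [h2 h3]]; exists S; auto.
Defined.

Inductive Mpt := Ma | Mw | Mb.

Definition Mopen (S : Mpt -> Prop) : Prop :=
  (forall p, ~ S p) \/
  (forall p, S p <-> p = Mw) \/
  (forall p, S p <-> p = Mw \/ p = Ma) \/
  (forall p, S p <-> p = Mw \/ p = Mb) \/
  (forall p, S p).

Lemma Mopen_iff S : Mopen S <-> ((S Ma -> S Mw) /\ (S Mb -> S Mw)).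
Proof.
  split.
  - intros [H|[H|[H|[H|H]]]].
    + split; intro h; destruct (H _ h).
    + split; intro h; apply H in h; discriminate.
    + split; intro h; apply H; auto; apply H in h; destruct h; discriminate.
    + split; intro h; apply H; auto; apply H in h; destruct h; discriminate.
    + split; intros; apply H.
  - intros [h1 h2].
    destruct (classic (S Mw)) as [w|w];
    destruct (classic (S Ma)) as [a|a];
    destruct (classic (S Mb)) as [b|b]; try tauto.
    + right; right; right; right; intros []; auto.
    + right; right; left; intros []; split; intro; try discriminate; auto;
        try tauto; destruct H; discriminate.
    + right; right; right; left; intros []; split; intro; try discriminate; auto;
        try tauto; destruct H; discriminate.
    + right; left; intros []; split; intro; try discriminate; auto; tauto.
    + left; intros []; auto.
Qed.

Definition Mspace : TopSpace.
Proof.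
  refine {| carrier := Mpt; open := Mopen |}.
  - apply Mopen_iff; tauto.
  - intros S T HS HT; apply Mopen_iff; apply Mopen_iff in HS, HT; tauto.
  - intros F HF; apply Mopen_iff; split; intros [S [FS HS]]; exists S; split; auto;
      destruct (proj1 (Mopen_iff S) (HF S FS)); auto.
Defined.

Definition nfun (p : Npt) : Mpt :=
  match p with Na => Ma | Nb => Mb | _ => Mw end.

Definition nmap : cmap Nspace Mspace.
Proof.
  refine {| cfun := (nfun : Nspace -> Mspace) |}.
  intros S HS. simpl in *. apply Mopen_iff in HS. unfold Nopen; simpl; tauto.
Defined.

(** A continuous map [X -> M] is the same thing as a pair of disjoint closed
    subsets of [X], namely the preimages of [a] and [b].  Lifting it through [n]
    amounts to choosing disjoint open neighbourhoods of these two closed sets: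
    given a lift [h], take the preimages of [{a,U}] and [{b,V}]; conversely,
    given neighbourhoods [U'] and [V'], send the points over [w] lying in [U']
    to [U], those in [V'] to [V] and the remaining ones to [x].  Since the
    square over [empty -> X] commutes trivially, this is exactly normality. *)

From Stdlib Require Import Classical ClassicalEpsilon FunctionalExtensionality PropExtensionality.

Section OpenSets.

Variable X : TopSpace.

Lemma open_ext (S T : X -> Prop) : (forall x, S x <-> T x) -> open S -> open T.
Proof.
  intros ST HS.
  replace T with S; [exact HS|].
  apply functional_extensionality; intro x; apply propositional_extensionality; auto.
Qed.

Lemma open_set0 : open (fun _ : X => False).
Proof.
  eapply open_ext; [|apply (open_union X (fun _ => False)); intros _ []].
  intro x; split; [intros [S [[] _]] | intros []].
Qed.

Lemma open_setU (S T : X -> Prop) : open S -> open T -> open (fun x => S x \/ T x).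
Proof.
  intros HS HT.
  eapply open_ext;
    [|apply (open_union X (fun R => R = S \/ R = T)); intros R [-> | ->]; auto].
  intro x; split.
  - intros [R [[-> | ->] HR]]; auto.
  - intros [Sx | Tx]; [exists S | exists T]; auto.
Qed.

Lemma open_guard (c : Prop) (S : X -> Prop) : open S -> open (fun x => c /\ S x).
Proof.
  intros HS; destruct (classic c) as [Hc | Hc].
  - eapply open_ext; [|exact HS]; intro; tauto.
  - eapply open_ext; [|exact open_set0]; intro; tauto.
Qed.

End OpenSets.

Lemma Mopen_w_a : Mopen (fun p => p = Mw \/ p = Ma).
Proof. apply Mopen_iff; auto. Qed.

Lemma Mopen_w_b : Mopen (fun p => p = Mw \/ p = Mb).
Proof. apply Mopen_iff; auto. Qed.

Lemma Mopen_w : Mopen (fun p => p = Mw).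
Proof. apply Mopen_iff; split; intros; discriminate. Qed.

Lemma Nopen_a_U : Nopen (fun p => p = Na \/ p = NU).
Proof. unfold Nopen; intuition discriminate. Qed.

Lemma Nopen_b_V : Nopen (fun p => p = Nb \/ p = NV).
Proof. unfold Nopen; intuition discriminate. Qed.

Section MapsToM.

Variable X : TopSpace.

Lemma closed_preimage_Ma (j : cmap X Mspace) : closed (fun z => j z = Ma).
Proof.
  eapply open_ext; [|exact (ccont _ _ j _ Mopen_w_b)].
  intro z; simpl; destruct (j z); intuition discriminate.
Qed.

Lemma closed_preimage_Mb (j : cmap X Mspace) : closed (fun z => j z = Mb).
Proof.
  eapply open_ext; [|exact (ccont _ _ j _ Mopen_w_a)].
  intro z; simpl; destruct (j z); intuition discriminate.
Qed.

Lemma cmap_to_M_of_closed (C D : X -> Prop) :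
  closed C -> closed D -> (forall z, C z -> D z -> False) ->
  exists j : cmap X Mspace, (forall z, C z -> j z = Ma) /\ (forall z, D z -> j z = Mb).
Proof.
  intros HC HD CD.
  set (jf z := if excluded_middle_informative (C z) then Ma
               else if excluded_middle_informative (D z) then Mb else Mw).
  assert (jf_cont : forall S : Mspace -> Prop, open S -> open (fun z => S (jf z))).
  { intros S HS; apply Mopen_iff in HS; destruct HS as [a_w b_w].
    eapply open_ext with (S := fun z =>
      (S Mw /\ (~ C z /\ ~ D z)) \/ (S Ma /\ ~ D z) \/ (S Mb /\ ~ C z)).
    - intro z; unfold jf.
      destruct (excluded_middle_informative (C z));
      destruct (excluded_middle_informative (D z)); firstorder.
    - repeat apply open_setU; apply open_guard; try apply open_inter; assumption. }
  exists (Build_cmap X Mspace jf jf_cont); simpl; unfold jf; split; intros z Hz.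
  - destruct (excluded_middle_informative (C z)); tauto.
  - destruct (excluded_middle_informative (C z)); [exfalso; eauto|].
    destruct (excluded_middle_informative (D z)); tauto.
Qed.

Lemma lift_along_n (j : cmap X Mspace) (U V : X -> Prop) :
  open U -> open V -> (forall z, j z = Ma -> U z) -> (forall z, j z = Mb -> V z) ->
  (forall z, U z -> V z -> False) ->
  exists h : cmap X Nspace, forall z, nfun (h z) = j z.
Proof.
  intros HU HV aU bV UV.
  set (hf z := match j z with
               | Ma => Na
               | Mb => Nb
               | Mw => if excluded_middle_informative (U z) then NU
                       else if excluded_middle_informative (V z) then NV else Nx
               end).
  assert (hf_cont : forall S : Nspace -> Prop, open S -> open (fun z => S (hf z))).
  { intros S [a_U [x_UV b_V]].
    pose proof (ccont _ _ j _ Mopen_w_a) as Hwa.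
    pose proof (ccont _ _ j _ Mopen_w_b) as Hwb.
    pose proof (ccont _ _ j _ Mopen_w) as Hw.
    eapply open_ext with (S := fun z =>
      (S Na /\ (U z /\ (j z = Mw \/ j z = Ma))) \/ (S NU /\ (U z /\ j z = Mw)) \/
      (S Nb /\ (V z /\ (j z = Mw \/ j z = Mb))) \/ (S NV /\ (V z /\ j z = Mw)) \/
      (S Nx /\ j z = Mw)).
    - intro z; unfold hf.
      specialize (aU z); specialize (bV z); specialize (UV z).
      destruct (j z);
      [| destruct (excluded_middle_informative (U z));
         [| destruct (excluded_middle_informative (V z))] |];
      intuition discriminate.
    - repeat apply open_setU; apply open_guard; try apply open_inter; assumption. }
  exists (Build_cmap X Nspace hf hf_cont); intro z; simpl; unfold hf.
  destruct (j z); [reflexivity | | reflexivity].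
  destruct (excluded_middle_informative (U z));
  [| destruct (excluded_middle_informative (V z))]; reflexivity.
Qed.

End MapsToM.

Lemma nfun_eq_Ma (p : Npt) : nfun p = Ma -> p = Na.
Proof. destruct p; simpl; congruence. Qed.

Lemma nfun_eq_Mb (p : Npt) : nfun p = Mb -> p = Nb.
Proof. destruct p; simpl; congruence. Qed.

Theorem claim1 (X : TopSpace) : normal X <-> llp (from_empty X) nmap.
Proof.
  split.
  - intros Hnormal i j _.
    destruct (Hnormal (fun z => j z = Ma) (fun z => j z = Mb)
                (closed_preimage_Ma X j) (closed_preimage_Mb X j))
      as [U [V [HU [HV [aU [bV UV]]]]]].
    { intros z ->; discriminate. }
    destruct (lift_along_n X j U V HU HV aU bV UV) as [h Hh].
    exists h; split; [intros [] | exact Hh].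
  - intros Hllp C D HC HD CD.
    destruct (cmap_to_M_of_closed X C D HC HD CD) as [j [Cj Dj]].
    destruct (Hllp (from_empty Nspace) j) as [h [_ Hh]]; [intros [] |].
    exists (fun z => h z = Na \/ h z = NU), (fun z => h z = Nb \/ h z = NV).
    repeat split.
    + exact (ccont _ _ h _ Nopen_a_U).
    + exact (ccont _ _ h _ Nopen_b_V).
    + intros z Cz; left; apply nfun_eq_Ma; exact (eq_trans (Hh z) (Cj z Cz)).
    + intros z Dz; left; apply nfun_eq_Mb; exact (eq_trans (Hh z) (Dj z Dz)).
    + intros z [-> | ->] [Hz | Hz]; discriminate.
Qed.
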